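(* Let $n$ be a positive integer and let $f$ be an $n$-variable Boolean function. Let $g$ be an $n$-variable Boolean function achieving ${FAI}(f)$, i.e. $g\in{AN}^c(f)$, $g\neq 1$ and $\deg(g)+\deg(f\cdot g)={FAI}(f)$. Then $\deg(g)\le\left\lfloor\frac{{FAI}(f)}{2}\right\rfloor$ and $\deg(f\cdot g)\ge\left\lceil\frac{{FAI}(f)}{2}\right\rceil$.
   Context: An $n$-variable Boolean function is a map $\mathbb{F}_2^n\to\mathbb{F}_2$, with algebraic degree $\deg$ the degree of its algebraic normal form. ${AN}^c(f)$ is the set of $n$-variable Boolean functions $g$ with $f\cdot g\neq 0$ (pointwise product). The fast algebraic immunity ${FAI}(f)$ is the minimum of $\deg(g)+\deg(f\cdot g)$ over $g\in{AN}^c(f)$, $g\neq 1$. *)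

From mathcomp Require Import all_boot.
Set Implicit Arguments. Unset Strict Implicit. Unset Printing Implicit Defensive.

Definition point (n : nat) := {ffun 'I_n -> bool}.
Definition boolfun (n : nat) := {ffun point n -> bool}.

(* Evaluation of the polynomial with coefficient vector a (a u = coefficient
   of the monomial prod_{i in u} x_i) at x, over F_2 (xor = addition). *)
Definition anf_eval n (a : {ffun {set 'I_n} -> bool}) (x : point n) : bool :=
  \big[addb/false]_(u : {set 'I_n}) (a u && [forall i in u, x i]).

Definition deg_le n (f : boolfun n) (d : nat) : bool :=
  [exists a : {ffun {set 'I_n} -> bool},
     [forall x, anf_eval a x == f x] && [forall u, a u ==> (#|u| <= d)]].

(* Algebraic degree: degree of the (unique) ANF, i.e. least d with deg_le f d
   (every f has an ANF of degree <= n). *)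
Definition bdeg n (f : boolfun n) : nat :=
  \big[minn/n]_(d < n.+1 | deg_le f d) d.

Definition bmul n (f g : boolfun n) : boolfun n := [ffun x => f x && g x].
Definition bzero n : boolfun n := [ffun => false].
Definition bone n : boolfun n := [ffun => true].

Definition ANc n (f g : boolfun n) : bool := bmul f g != bzero n.

(* The default value 2n+1 (larger than any candidate) is only used when the
   set is empty, which never happens under the hypotheses of the theorem. *)
Definition FAI n (f : boolfun n) : nat :=
  \big[minn/(2 * n).+1]_(g : boolfun n | ANc f g && (g != bone n))
     (bdeg g + bdeg (bmul f g)).

From mathcomp Require Import all_boot all_order.
From mathcomp Require Import zify.
Import Order.TTheory.

(* If g is admissible for FAI(f), so is h = f g, and f h = h.  Hence
   FAI(f) <= deg h + deg (f h) = 2 deg h, and together with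
   deg g + deg h = FAI(f) this gives deg g <= deg h: the smaller summand is
   deg g, the larger one deg h. *)

Section FAIProduct.

Context {n : nat} {f : boolfun n}.

Lemma bmul_idl {g : boolfun n} : bmul f (bmul f g) = bmul f g.
Proof. by apply/ffunP => x; rewrite !ffunE andbA andbb. Qed.

Lemma bmul_neq_bone {g : boolfun n} : g != bone n -> bmul f g != bone n.
Proof.
apply: contra => /eqP/ffunP fg1; apply/eqP/ffunP => x.
by have := fg1 x; rewrite !ffunE => /andP[].
Qed.

Lemma ANc_bmul {g : boolfun n} : ANc f g -> ANc f (bmul f g).
Proof. by rewrite /ANc bmul_idl. Qed.

Lemma FAI_le {g : boolfun n} :
  ANc f g -> g != bone n -> FAI f <= bdeg g + bdeg (bmul f g).
Proof.
(* [minn] is convertible to [Order.min] on [nat]. *)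
by move=> fg g1; apply: (@bigmin_le_cond _ nat); rewrite fg g1.
Qed.

Lemma FAI_le_double_bdeg_bmul {g : boolfun n} :
  ANc f g -> g != bone n -> FAI f <= (bdeg (bmul f g)).*2.
Proof.
move=> fg g1; rewrite -addnn -[X in _ + bdeg X]bmul_idl.
exact: FAI_le (ANc_bmul fg) (bmul_neq_bone g1).
Qed.

End FAIProduct.

Lemma halves_leq_addn a b : a <= b -> a <= (a + b)./2 /\ uphalf (a + b) <= b.
Proof.
move=> ab; have := odd_double_half (a + b); have := uphalf_half (a + b).
split; lia.
Qed.

Theorem proposition4 (n : nat) (f g : boolfun n) :
  0 < n ->
  ANc f g -> g != bone n ->
  bdeg g + bdeg (bmul f g) = FAI f ->
  bdeg g <= (FAI f) ./2 /\ bdeg (bmul f g) >= uphalf (FAI f).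
Proof.
move=> _ fg g1 optimal; rewrite -optimal; apply: halves_leq_addn.
by have := FAI_le_double_bdeg_bmul fg g1; rewrite -optimal -addnn leq_add2r.
Qed.
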